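(* Let $\Omega$ be a distribution of $\Sigma$, $\mathsf{Obs}$ an observation function over $\Sigma$ with $\Omega\models\mathsf{Obs}$, and $(\sigma,b)\in\Sigma^\star\times\{+,-\}$ with $\sigma\notin\mathsf{Dom}(\mathsf{Obs})$ such that, with $\mathsf{Obs}'=\mathsf{Obs}\cup\{(\sigma,b)\}$, $\Omega\not\models\mathsf{Obs}'$. Then $\mathit{CED}(\Omega,\mathsf{Obs}')\ne\emptyset$, and every $(\sigma_N,P)\in\mathit{CED}(\Omega,\mathsf{Obs}')$ has the following form: - if $b=-$: $\sigma_N=\sigma$ and $P(\Sigma_i)\in\mathsf{Dom}(\mathsf{Obs})$ for all $\Sigma_i\in\Omega$; - if $b=+$: $\sigma_N\in\mathsf{Dom}(\mathsf{Obs})$, and with $S=\{\Sigma_i\in\Omega\mid P(\Sigma_i)=\sigma\}$ we have $S\ne\emptyset$ and $P(\Sigma_i)\in\mathsf{Dom}(\mathsf{Obs})$ for all $\Sigma_i\in\Omega\setminus S$.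
   Context: $\sigma|_{\Sigma'}$ is the projection of a word onto $\Sigma'$. A distribution of $\Sigma$ is a finite set of subsets of $\Sigma$ with union $\Sigma$. An observation function is a partial map $\mathsf{Obs}:\Sigma^\star\rightharpoonup\{+,-\}$ with finite domain, identified with its set of pairs $(\sigma,\mathsf{Obs}(\sigma))$. $\Omega\models\mathsf{Obs}$ means there exist $\mathcal L_{\Sigma_i}\subseteq\Sigma_i^\star$ ($\Sigma_i\in\Omega$) such that $\mathcal L=\{w\mid\forall\Sigma_i\in\Omega.\ w|_{\Sigma_i}\in\mathcal L_{\Sigma_i}\}$ satisfies $\sigma\in\mathcal L\iff\mathsf{Obs}(\sigma)=+$ for all $\sigma\in\mathsf{Dom}(\mathsf{Obs})$. A counter-example to $\Omega\models\mathsf{Obs}$ is a pair $(\sigma_N,P)$ with $\sigma_N\in\mathsf{Dom}(\mathsf{Obs})$, $\mathsf{Obs}(\sigma_N)=-$, and $P:\Omega\to\mathsf{Dom}(\mathsf{Obs})$ with $\mathsf{Obs}(P(\Sigma_i))=+$ and $\sigma_N|_{\Sigma_i}=P(\Sigma_i)|_{\Sigma_i}$ for all $\Sigma_i\in\Omega$; $\mathit{CED}(\Omega,\mathsf{Obs})$ is the set of these. *)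

From mathcomp Require Import all_boot finmap.
Set Implicit Arguments. Unset Strict Implicit. Unset Printing Implicit Defensive.
Local Open Scope fmap_scope.

(* Alphabet Sigma : finType; words are seq Sigma.
   Observations: bool with true = '+', false = '-'. *)

Definition proj (Sigma : finType) (S : {set Sigma}) (w : seq Sigma) : seq Sigma :=
  [seq a <- w | a \in S].

Definition distribution (Sigma : finType) (Om : {set {set Sigma}}) : Prop :=
  \bigcup_(S in Om) S = [set: Sigma].

Definition obsfun (Sigma : finType) := {fmap seq Sigma -> bool}.

Definition dlang (Sigma : finType) (Om : {set {set Sigma}})
  (L : {set Sigma} -> seq Sigma -> Prop) (w : seq Sigma) : Prop :=
  forall Si, Si \in Om -> L Si (proj Si w).

Definition models (Sigma : finType) (Om : {set {set Sigma}}) (Obs : obsfun Sigma) : Prop :=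
  exists L : {set Sigma} -> seq Sigma -> Prop,
    (forall Si w, L Si w -> all (fun a => a \in Si) w) /\
    forall s (hs : s \in domf Obs), dlang Om L s <-> Obs.[hs] = true.

(* (sN, P) is a counter-example to Om |= Obs, i.e. (sN,P) \in CED(Om,Obs).
   P : Om -> Dom(Obs) is represented by a total function whose values
   outside Om are irrelevant. *)
Definition is_CE (Sigma : finType) (Om : {set {set Sigma}}) (Obs : obsfun Sigma)
  (sN : seq Sigma) (P : {set Sigma} -> seq Sigma) : Prop :=
  Obs.[? sN] = Some false /\
  forall Si, Si \in Om ->
    Obs.[? P Si] = Some true /\ proj Si sN = proj Si (P Si).

From mathcomp Require Import all_boot finmap.
From Stdlib Require Import Classical_Prop.
Set Implicit Arguments.
Unset Strict Implicit.
Unset Printing Implicit Defensive.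
Local Open Scope fmap_scope.

(* The projections of the positive observations are the least local languages
   accepting all positive observations, so [Om |= Obs] fails exactly when some
   negative observation lies in the distributed language they define; the
   projection witnesses then form a counter-example.  Extending a consistent
   [Obs] by the fresh pair [(s, b)] can only create counter-examples that use
   the new pair: as the negative word when [b = -], and as at least one
   positive witness when [b = +]. *)

Lemma fnd_Some_dom (K : choiceType) (V : Type) (f : {fmap K -> V}) k v :
  f.[? k] = Some v -> k \in domf f.
Proof. by move=> fk; rewrite -fndSome fk. Qed.

Section CounterExamples.

Variables (Sigma : finType) (Om : {set {set Sigma}}).
Implicit Types (Obs : obsfun Sigma) (s sN : seq Sigma).

Lemma models_fndE Obs L :
  (forall s (hs : s \in domf Obs), dlang Om L s <-> Obs.[hs] = true) <->
  (forall s, s \in domf Obs -> (dlang Om L s <-> Obs.[? s] = Some true)).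
Proof.
split=> HL s hs; have := HL s hs; rewrite in_fnd.
  by move=> ->; split=> [->|[]].
by move=> ->; split=> [[]|->].
Qed.

Lemma is_CE_not_models Obs sN P : is_CE Om Obs sN P -> ~ models Om Obs.
Proof.
move=> [HN HP] [L [_ /models_fndE HL]].
have dlang_sN : dlang Om L sN.
  move=> Si hSi; have [PSi_pos ->] := HP Si hSi.
  exact: (proj2 (HL _ (fnd_Some_dom PSi_pos)) PSi_pos Si hSi).
by move: (proj1 (HL _ (fnd_Some_dom HN)) dlang_sN); rewrite HN.
Qed.

Definition positive_proj Obs (Si : {set Sigma}) (w : seq Sigma) : Prop :=
  exists2 k, Obs.[? k] = Some true & w = proj Si k.

Lemma models_positive_proj Obs :
  (forall s, Obs.[? s] = Some false -> ~ dlang Om (positive_proj Obs) s) ->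
  models Om Obs.
Proof.
move=> no_neg; exists (positive_proj Obs); split.
  by move=> Si w [k _ ->]; apply: filter_all.
apply/models_fndE => s hs; split; last by move=> s_pos Si _; exists s.
move=> dlang_s; move: (no_neg s) dlang_s; rewrite in_fnd.
by case: Obs.[hs] => // /(_ erefl).
Qed.

Lemma positive_proj_CE Obs s :
  Obs.[? s] = Some false -> dlang Om (positive_proj Obs) s ->
  exists P, is_CE Om Obs s P.
Proof.
move=> s_neg dlang_s.
pose witness Si k := (Obs.[? k] == Some true) && (proj Si s == proj Si k).
pose ks : seq (seq Sigma) := domf Obs.
exists (fun Si => nth [::] ks (find (witness Si) ks)); split=> // Si hSi.
have : has (witness Si) ks.
  have [k k_pos sk] := dlang_s Si hSi; apply/hasP; exists k.
    exact: fnd_Some_dom k_pos.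
  by rewrite /witness k_pos sk !eqxx.
by move/(nth_find [::]) => /andP[/eqP -> /eqP ->].
Qed.

Lemma not_models_CE Obs :
  ~ models Om Obs -> exists sN P, is_CE Om Obs sN P.
Proof.
move=> not_models; apply: NNPP => no_CE; apply/not_models/models_positive_proj.
by move=> s s_neg dlang_s; apply: no_CE; exists s; apply: positive_proj_CE.
Qed.

Lemma is_CE_setf Obs s b sN P :
  is_CE Om Obs.[s <- b] sN P -> sN != s -> {in Om, forall Si, P Si != s} ->
  is_CE Om Obs sN P.
Proof.
move=> [HN HP] sN_s P_s; split; first by rewrite fnd_set (negbTE sN_s) in HN.
move=> Si hSi; have [PSi_pos ->] := HP Si hSi.
by rewrite fnd_set (negbTE (P_s Si hSi)) in PSi_pos.
Qed.

Lemma is_CE_setf_uses_new Obs s b sN P :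
  models Om Obs -> is_CE Om Obs.[s <- b] sN P ->
  sN = s \/ exists2 Si, Si \in Om & P Si = s.
Proof.
move=> Obs_models CE; case: (eqVneq sN s) => [|sN_s]; [by left | right].
case: (boolP [exists Si in Om, P Si == s]) => [/exists_inP[Si hSi /eqP]|].
  by exists Si.
by move/exists_inPn/(is_CE_setf CE sN_s)/is_CE_not_models/(_ Obs_models).
Qed.

End CounterExamples.

Theorem mainTheorem14 (Sigma : finType) (Om : {set {set Sigma}})
  (Obs : obsfun Sigma) (s : seq Sigma) (b : bool) :
  distribution Om ->
  models Om Obs ->
  s \notin domf Obs ->
  ~ models Om Obs.[s <- b] ->
  (exists sN P, is_CE Om Obs.[s <- b] sN P) /\
  (forall sN P, is_CE Om Obs.[s <- b] sN P ->
     if b then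
       sN \in domf Obs /\
       (exists2 Si, Si \in Om & P Si = s) /\
       (forall Si, Si \in Om -> P Si != s -> P Si \in domf Obs)
     else
       sN = s /\ (forall Si, Si \in Om -> P Si \in domf Obs)).
Proof.
move=> _ Obs_models _ not_models'; split; first exact: not_models_CE.
move=> sN P CE; have CE_uses_s := is_CE_setf_uses_new Obs_models CE.
case: CE => HN HP.
have P_pos Si : Si \in Om -> P Si != s -> Obs.[? P Si] = Some true.
  by move=> hSi PSi_s; have [] := HP Si hSi; rewrite fnd_set (negbTE PSi_s).
case: b {not_models'} HN HP P_pos => HN HP P_pos.
- rewrite fnd_set in HN; case: eqP HN => // sN_s HN.
  split; first exact: fnd_Some_dom HN.
  split; last by move=> Si hSi PSi_s; exact: fnd_Some_dom (P_pos Si hSi PSi_s).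
  by case: CE_uses_s.
- have P_s Si : Si \in Om -> P Si != s.
    by move=> hSi; have [] := HP Si hSi; rewrite fnd_set; case: eqP.
  have sN_s : sN = s by case: CE_uses_s => // -[Si /P_s/eqP].
  split=> // Si hSi; exact: fnd_Some_dom (P_pos Si hSi (P_s Si hSi)).
Qed.
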